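(* Let $R$ be a commutative ring such that every semi-compact $R$-module is pure-injective. Then every prime ideal of $R$ is maximal.
   Context: An $R$-module $M$ is semi-compact if every finitely solvable system of congruences $x\equiv x_\alpha \pmod{M[I_\alpha]}$ ($\alpha\in\Lambda$, $x_\alpha\in M$, $I_\alpha$ an ideal, $M[I_\alpha]=\{m\in M: I_\alpha m=0\}$) has a simultaneous solution in $M$. A module is pure-injective if it is injective relative to all pure exact sequences (those remaining exact under tensoring with every module). *)

From HB Require Import structures.
From mathcomp Require Import all_boot all_order all_algebra.
Set Implicit Arguments. Unset Strict Implicit. Unset Printing Implicit Defensive.
Import GRing.Theory.
Local Open Scope ring_scope.

Section ModuleDefs.
Variable R : comPzRingType.

Definition is_ideal (I : R -> Prop) : Prop :=
  I 0 /\ (forall x y, I x -> I y -> I (x + y)) /\ (forall r x, I x -> I (r * x)).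

Definition prime_ideal (I : R -> Prop) : Prop :=
  is_ideal I /\ ~ I 1 /\ (forall x y, I (x * y) -> I x \/ I y).

Definition maximal_ideal (I : R -> Prop) : Prop :=
  is_ideal I /\ ~ I 1 /\
  (forall J : R -> Prop, is_ideal J -> (forall x, I x -> J x) ->
     (forall x, J x) \/ (forall x, J x -> I x)).

Definition annih_sub (M : lmodType R) (I : R -> Prop) : M -> Prop :=
  fun m => forall r, I r -> r *: m = 0.

(* Semi-compact module: every finitely solvable system of congruences
   x = x_a (mod M[I_a]) (a in Lambda, I_a ideals) has a global solution. *)
Definition semi_compact (M : lmodType R) : Prop :=
  forall (Lambda : Type) (xs : Lambda -> M) (I : Lambda -> R -> Prop),
    (forall a, is_ideal (I a)) ->
    (forall (n : nat) (s : 'I_n -> Lambda), exists x : M,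
        forall i, annih_sub (I (s i)) (x - xs (s i))) ->
    exists x : M, forall a, annih_sub (I a) (x - xs a).

Definition bilinear_map (X M N : lmodType R) (b : X -> M -> N) : Prop :=
  (forall (r : R) x y m, b (r *: x + y) m = r *: b x m + b y m) /\
  (forall (r : R) x m n, b x (r *: m + n) = r *: b x m + b x n).

(* The element sum_i x_i (x) m_i of X (x)_R M is zero, i.e. (universal
   property of the tensor product) it is killed by every bilinear map. *)
Definition tensor_zero (X M : lmodType R) (l : seq (X * M)) : Prop :=
  forall (N : lmodType R) (b : X -> M -> N), bilinear_map b ->
    \sum_(p <- l) b p.1 p.2 = 0.

(* f : A -> B is a pure monomorphism, i.e. 0 -> A -> B -> B/f(A) -> 0 is
   pure exact: f is injective and f (x) M : A (x) M -> B (x) M is injective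
   for every module M. *)
Definition pure_mono (A B : lmodType R) (f : {linear A -> B}) : Prop :=
  injective f /\
  forall (M : lmodType R) (l : seq (A * M)),
    tensor_zero (map (fun p => (f p.1, p.2)) l) -> tensor_zero l.

Definition pure_injective (E : lmodType R) : Prop :=
  forall (A B : lmodType R) (f : {linear A -> B}), pure_mono f ->
    forall h : {linear A -> E},
      exists h' : {linear B -> E}, forall a, h' (f a) = h a.

End ModuleDefs.

(* Suppose P is prime but not maximal, and pick s outside P that is not invertible
   modulo P.  Over the domain D = R/P, the polynomial module D[X] is semi-compact:
   each element of R either annihilates D[X] (if it lies in P) or acts injectively
   on it, so every annihilator submodule D[X][I] is 0 or everything.  The embedding
   of D[X] into the sequence module D^N is pure, since truncations give linear left
   inverses on polynomials of bounded degree.  If the identity of D[X] extended along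
   it, the image of the geometric sequence (s^k) would be a polynomial of some
   degree N, and comparing the coefficient of X^N with the decomposition
   (s^k) = (1, s, ..., s^N, 0, ...) + s^(N+1) (0, ..., 0, 1, s, ...) yields
   s^N (1 + s c) in P for some c, contradicting the choice of s. *)

From HB Require Import structures.
From mathcomp Require Import all_boot all_order all_algebra.
From mathcomp Require Import ring_quotient generic_quotient boolp functions.

Set Implicit Arguments. Unset Strict Implicit. Unset Printing Implicit Defensive.
Import GRing.Theory.
Local Open Scope ring_scope.
Local Open Scope quotient_scope.

Section QuotientLmodule.
Variables (R : pzRingType) (V : lmodType R) (S : zmodClosed V).
Hypothesis S_scale : scaler_closed S.

(* The [let] makes the type depend on [S_scale], so that the module structure
   declared below remains canonical once the section is closed. *)
Definition quot_lmod : Type := let _ := S_scale in {ideal_quot S}.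
HB.instance Definition _ := GRing.Zmodule.on quot_lmod.
HB.instance Definition _ : EqQuotient V (Quotient.equiv S) quot_lmod :=
  EqQuotient.on quot_lmod.
HB.instance Definition _ := ZmodQuotient.on quot_lmod.

Local Notation pi := \pi_quot_lmod.
Local Notation quot_ind := (@quotW _ quot_lmod).

Lemma quot_lmod_eqP (u v : V) : pi u = pi v <-> u - v \in S.
Proof.
split=> [e|uvS]; first by rewrite (Quotient.idealrBE S) e.
by apply/eqP; rewrite -(Quotient.idealrBE S).
Qed.

Lemma quot_lmod_pi_eq0 (u : V) : pi u = 0 <-> u \in S.
Proof. by rewrite -(raddf0 pi) quot_lmod_eqP subr0. Qed.

Lemma quot_lmod_piD : {morph pi : u v / u + v}.
Proof. exact: raddfD. Qed.

Definition quot_scale (r : R) (q : quot_lmod) : quot_lmod := pi (r *: repr q).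

Lemma quot_scale_pi r u : quot_scale r (pi u) = pi (r *: u).
Proof.
apply/quot_lmod_eqP; rewrite -scalerBr S_scale //.
by apply/quot_lmod_eqP; rewrite reprK.
Qed.

Lemma quot_scaleA a b q : quot_scale a (quot_scale b q) = quot_scale (a * b) q.
Proof. by elim/quot_ind: q => u; rewrite !quot_scale_pi scalerA. Qed.

Lemma quot_scale1 : left_id 1 quot_scale.
Proof. by elim/quot_ind => u; rewrite quot_scale_pi scale1r. Qed.

Lemma quot_scaleDr : right_distributive quot_scale +%R.
Proof.
move=> a; elim/quot_ind => u; elim/quot_ind => v.
by rewrite -quot_lmod_piD !quot_scale_pi scalerDr quot_lmod_piD.
Qed.

Lemma quot_scaleDl q : {morph quot_scale^~ q : a b / a + b}.
Proof.
by move=> a b; elim/quot_ind: q => u; rewrite !quot_scale_pi scalerDl quot_lmod_piD.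
Qed.

HB.instance Definition _ := GRing.Zmodule_isLmodule.Build R quot_lmod
  quot_scaleA quot_scale1 quot_scaleDr quot_scaleDl.

Lemma quot_lmod_piZ r u : r *: pi u = pi (r *: u).
Proof. exact: quot_scale_pi. Qed.

End QuotientLmodule.

Arguments quot_lmod_eqP {R V S S_scale u v}.
Arguments quot_lmod_pi_eq0 {R V S S_scale u}.

Section QuotientMap.
Variables (R : pzRingType) (V W : lmodType R) (S : zmodClosed V) (T : zmodClosed W).
Hypotheses (S_scale : scaler_closed S) (T_scale : scaler_closed T).
Variables (phi : {linear V -> W}) (phiS : {in S, forall v, phi v \in T}).

Local Notation piS := \pi_(quot_lmod S_scale).
Local Notation piT := \pi_(quot_lmod T_scale).
Local Notation quot_ind := (@quotW _ (quot_lmod S_scale)).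

(* The [let] plays the same role as in [quot_lmod], for the linear structure. *)
Definition quot_map (q : quot_lmod S_scale) : quot_lmod T_scale :=
  let _ := phiS in piT (phi (repr q)).

Lemma quot_map_pi v : quot_map (piS v) = piT (phi v).
Proof.
apply/quot_lmod_eqP; rewrite -linearB phiS //.
by apply/quot_lmod_eqP; rewrite reprK.
Qed.

Lemma quot_map_is_linear : linear quot_map.
Proof.
move=> a; elim/quot_ind => u; elim/quot_ind => v.
rewrite quot_lmod_piZ -quot_lmod_piD !quot_map_pi linearP.
by rewrite quot_lmod_piD quot_lmod_piZ.
Qed.

HB.instance Definition _ := GRing.isLinear.Build R (quot_lmod S_scale)
  (quot_lmod T_scale) *:%R quot_map quot_map_is_linear.

End QuotientMap.

Arguments quot_map {R V W S T S_scale T_scale phi} phiS q.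

Lemma maximal_ideal_units_mod (R : comPzRingType) (P : R -> Prop) :
  is_ideal P -> ~ P 1 -> (forall s, ~ P s -> exists r, P (s * r - 1)) ->
  maximal_ideal P.
Proof.
move=> P_ideal P1 units_mod; split=> // ; split=> // J [J0 [JD JM]] PJ.
have [JP|/existsNP[s /not_implyP[Js Ps]]] := pselect (forall x, J x -> P x).
  by right.
left; have [r Psr1] := units_mod s Ps.
have J1 : J 1.
  have -> : 1 = s * r + (-1) * (s * r - 1) by rewrite mulN1r opprB addrC subrK.
  by apply: JD; [rewrite mulrC; apply: JM | apply/JM/PJ].
by move=> x; rewrite -(mulr1 x); apply: JM.
Qed.

Lemma semi_compact_scale_eq0 (R : comPzRingType) (M : lmodType R) (P : R -> Prop) :
  (forall r (m : M), r *: m = 0 <-> P r \/ m = 0) -> semi_compact M.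
Proof.
move=> scale_eq0 L xs I _ solvable.
have killed r (m : M) : P r -> r *: m = 0 by move=> Pr; apply/scale_eq0; left.
have [[a0 [r0 [Ir0 Pr0]]]|] := pselect (exists a0 r, I a0 r /\ ~ P r); last first.
  move=> noreg; exists 0 => a r Ir; apply: killed; apply: contrapT => Pr.
  by apply: noreg; exists a, r.
exists (xs a0) => a r Ir; have [Pr|Pr] := pselect (P r); first exact: killed.
have [x sol] := solvable 2 (fun i : 'I_2 => if val i == 0%N then a0 else a).
have regular r' (m : M) : ~ P r' -> r' *: m = 0 -> m = 0.
  by move=> Pr' /scale_eq0 [].
move: (regular _ _ Pr0 (sol ord0 _ Ir0)) (regular _ _ Pr (sol ord_max _ Ir)).
by move=> /= /subr0_eq <- /subr0_eq ->; rewrite subrr scaler0.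
Qed.

Lemma pure_mono_truncations (R : comPzRingType) (A B : lmodType R)
    (f : {linear A -> B}) (g : nat -> {linear B -> A}) (deg : A -> nat) :
  (forall n a, (deg a <= n)%N -> g n (f a) = a) -> pure_mono f.
Proof.
move=> gfK; split=> [a b fab|X l tz N b [bl br]].
  by rewrite -(gfK (maxn (deg a) (deg b)) a) ?leq_maxl // fab gfK ?leq_maxr.
set n := (\max_(p <- l) deg p.1)%N.
have bg_bilinear : bilinear_map (fun y m => b (g n y) m).
  by split=> [r x y m|r y m m']; rewrite ?linearP ?bl ?br.
rewrite -[RHS](tz N _ bg_bilinear) big_map; apply: eq_big_seq => p lp /=.
by rewrite gfK //; apply: leq_bigmax_seq.
Qed.

Section IdealFacts.
Variables (R : comPzRingType) (I : R -> Prop).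
Hypothesis I_ideal : is_ideal I.

Lemma ideal0 : I 0. Proof. by case: I_ideal. Qed.
Lemma idealD x y : I x -> I y -> I (x + y).
Proof. by case: I_ideal => _ [ID _]; apply: ID. Qed.

Lemma idealMl r x : I x -> I (r * x).
Proof. by case: I_ideal => _ [_ IM]; apply: IM. Qed.

Lemma idealMr x r : I x -> I (x * r).
Proof. by rewrite mulrC; apply: idealMl. Qed.

Lemma idealN x : I x -> I (- x).
Proof. by move/(idealMl (-1)); rewrite mulN1r. Qed.

Lemma idealB x y : I x -> I y -> I (x - y).
Proof. by move=> Ix /idealN; apply: idealD. Qed.

End IdealFacts.

Lemma prime_ideal_exprn (R : comPzRingType) (P : R -> Prop) s n :
  prime_ideal P -> ~ P s -> ~ P (s ^+ n).
Proof.
case=> _ [P1 Pmul] Ps; elim: n => [|n IHn]; first by rewrite expr0.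
by rewrite exprS => /Pmul [].
Qed.

Section PrimeQuotients.
Variables (R : comPzRingType) (P : R -> Prop).
Hypothesis P_prime : prime_ideal P.

Let P_ideal : is_ideal P := P_prime.1.
Let P_mul : forall x y, P (x * y) -> P x \/ P y := P_prime.2.2.

Lemma prime_ideal_oner_neq0 : (1 : R) != 0.
Proof.
by apply/eqP => e; case: P_prime => _ [P1 _]; apply: P1; rewrite e; apply: ideal0.
Qed.

(* [R] is nontrivial because [P] is proper; polynomials need a nontrivial ring. *)
Definition Rnz : Type := R.
HB.instance Definition _ := GRing.ComPzRing.on Rnz.
HB.instance Definition _ := GRing.PzSemiRing_isNonZero.Build Rnz prime_ideal_oner_neq0.

Definition Rpoly : Type := {poly Rnz}.
HB.instance Definition _ := GRing.Zmodule.on Rpoly.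
HB.instance Definition _ := GRing.Zmodule_isLmodule.Build R Rpoly
  (@scalerA Rnz {poly Rnz}) (@scale1r Rnz {poly Rnz})
  (@scalerDr Rnz {poly Rnz}) (fun p => @scalerDl Rnz {poly Rnz} p).

Lemma coef_RpolyZ r (p : Rpoly) i : (r *: p)`_i = r * p`_i.
Proof. exact: (@coefZ Rnz). Qed.

Lemma coef_RpolyB (p q : Rpoly) i : (p - q)`_i = p`_i - q`_i.
Proof. exact: (@coefB Rnz). Qed.

Definition Rseq : lmodType R := nat -> R^o.

Definition P_coefs : {pred Rpoly} := fun p => `[< forall i, P p`_i >].
Definition P_terms : {pred Rseq} := fun w => `[< forall i, P (w i) >].

Lemma P_coefs_zmod : zmod_closed P_coefs.
Proof.
split; first by apply/asboolP => i; rewrite coef0; apply: ideal0.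
move=> p q /asboolP Pp /asboolP Pq; apply/asboolP => i.
by rewrite coef_RpolyB; apply: idealB.
Qed.

Lemma P_coefs_scale : scaler_closed P_coefs.
Proof.
by move=> r p /asboolP Pp; apply/asboolP => i; rewrite coef_RpolyZ; apply: idealMl.
Qed.

Lemma P_terms_zmod : zmod_closed P_terms.
Proof.
split; first by apply/asboolP => i; apply: ideal0.
by move=> v w /asboolP Pv /asboolP Pw; apply/asboolP => i; apply: idealB.
Qed.

Lemma P_terms_scale : scaler_closed P_terms.
Proof. by move=> r w /asboolP Pw; apply/asboolP => i; apply: idealMl. Qed.

HB.instance Definition _ := GRing.isZmodClosed.Build Rpoly P_coefs P_coefs_zmod.
HB.instance Definition _ := GRing.isZmodClosed.Build Rseq P_terms P_terms_zmod.

(* [Mpoly] is (R/P)[X] and [Mseq] is (R/P)^N. *)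
Local Notation Mpoly := (quot_lmod P_coefs_scale).
Local Notation Mseq := (quot_lmod P_terms_scale).

Definition coefs (p : Rpoly) : Rseq := fun i => p`_i.

Lemma coefs_is_linear : linear coefs.
Proof.
by move=> r p q; apply: funext => i; rewrite /coefs /= (@coefD Rnz) coef_RpolyZ.
Qed.

HB.instance Definition _ :=
  GRing.isLinear.Build R Rpoly Rseq *:%R coefs coefs_is_linear.

Definition trunc (n : nat) (w : Rseq) : Rpoly := \poly_(i < n) (w i : Rnz).

Lemma trunc_is_linear n : linear (trunc n).
Proof.
move=> r v w; apply/polyP => i.
rewrite (@coefD Rnz) coef_RpolyZ !coef_poly /=.
by case: ifP => // _; rewrite mulr0 addr0.
Qed.

HB.instance Definition _ n :=
  GRing.isLinear.Build R Rseq Rpoly *:%R (trunc n) (trunc_is_linear n).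

Lemma coefs_P_terms : {in P_coefs, forall p, coefs p \in P_terms}.
Proof. by move=> p /asboolP Pp; apply/asboolP. Qed.

Lemma trunc_P_coefs n : {in P_terms, forall w, trunc n w \in P_coefs}.
Proof.
move=> w /asboolP Pw; apply/asboolP => i; rewrite coef_poly.
by case: ifP => _; [apply: Pw | apply: ideal0].
Qed.

Lemma trunc_coefs n (p : Rpoly) : (size p <= n)%N -> trunc n (coefs p) = p.
Proof.
move=> size_p; apply/polyP => i; rewrite coef_poly.
by case: ltnP => // /(leq_trans size_p) /(nth_default 0).
Qed.

Definition coefs_mod : {linear Mpoly -> Mseq} := quot_map coefs_P_terms.
Definition trunc_mod n : {linear Mseq -> Mpoly} := quot_map (trunc_P_coefs n).

Local Notation piM := \pi_Mpoly.
Local Notation piB := \pi_Mseq.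

Lemma coefs_mod_pi p : coefs_mod (piM p) = piB (coefs p).
Proof. exact: quot_map_pi. Qed.

Lemma trunc_mod_pi n w : trunc_mod n (piB w) = piM (trunc n w).
Proof. exact: quot_map_pi. Qed.

Lemma pure_mono_coefs_mod : pure_mono coefs_mod.
Proof.
apply: (pure_mono_truncations (g := trunc_mod) (deg := fun q => size (repr q))).
by move=> n q size_q; rewrite -[q]reprK coefs_mod_pi trunc_mod_pi trunc_coefs.
Qed.

Lemma Mpoly_pi_eq0 p : piM p = 0 <-> forall i, P p`_i.
Proof.
by split=> [/quot_lmod_pi_eq0/asboolP|Pp]; last exact/quot_lmod_pi_eq0/asboolP.
Qed.

Lemma Mpoly_pi_coef_eq p q i : piM p = piM q -> P (p`_i - q`_i).
Proof. by move=> /quot_lmod_eqP /asboolP /(_ i); rewrite coef_RpolyB. Qed.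

Lemma Mpoly_scale_eq0 r (m : Mpoly) : r *: m = 0 <-> P r \/ m = 0.
Proof.
elim/(@quotW _ Mpoly): m => p; split=> [|[Pr|->]]; last by rewrite scaler0.
- rewrite quot_lmod_piZ => /Mpoly_pi_eq0 Prp.
  have [Pr|Pr] := pselect (P r); [by left | right].
  by apply/Mpoly_pi_eq0 => i; move: (Prp i); rewrite coef_RpolyZ => /P_mul[].
- rewrite quot_lmod_piZ; apply/Mpoly_pi_eq0 => i.
  by rewrite coef_RpolyZ; apply: idealMr.
Qed.

Lemma semi_compact_Mpoly : semi_compact Mpoly.
Proof. exact: semi_compact_scale_eq0 Mpoly_scale_eq0. Qed.

Section NonUnit.
Variable s : R.
Hypotheses (Ps : ~ P s) (s_nonunit : forall r, ~ P (s * r - 1)).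

Definition geom : Rseq := fun k => s ^+ k.
Definition geom_tail n : Rseq := fun k => if (k < n)%N then 0 else s ^+ (k - n).

Lemma geom_split n : geom = coefs (trunc n geom) + s ^+ n *: geom_tail n.
Proof.
apply: funext => k; rewrite !fctE /geom /geom_tail /coefs /= coef_poly.
case: ltnP => k_n; first by rewrite scaler0 addr0.
by rewrite add0r -[_ *: _]/(_ * _) -exprD subnKC.
Qed.

Lemma Mpoly_not_pure_injective : ~ pure_injective Mpoly.
Proof.
move=> Mpinj; have [h hK] := Mpinj _ _ _ pure_mono_coefs_mod idfun.
set N := size (repr (h (piB geom))).
have : h (piB geom) = piM (trunc N.+1 geom) + s ^+ N.+1 *: h (piB (geom_tail N.+1)).
  rewrite {1}(geom_split N.+1) quot_lmod_piD -quot_lmod_piZ -coefs_mod_pi.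
  by rewrite linearD linearZ hK.
rewrite -[h (piB geom)]reprK -[h _ in RHS]reprK quot_lmod_piZ -quot_lmod_piD.
move/(Mpoly_pi_coef_eq N).
rewrite (@coefD Rnz) coef_RpolyZ nth_default // coef_poly ltnSn /geom sub0r.
move=> /(idealN P_ideal); rewrite opprK exprSr -mulrA -{1}(mulr1 (s ^+ N)) -mulrDr.
case/P_mul => [|/(idealN P_ideal)]; first exact: prime_ideal_exprn.
by rewrite opprD addrC -mulrN; apply: s_nonunit.
Qed.

End NonUnit.

End PrimeQuotients.

Theorem proposition3p2 (R : comPzRingType) :
  (forall M : lmodType R, semi_compact M -> pure_injective M) ->
  forall P : R -> Prop, prime_ideal P -> maximal_ideal P.
Proof.
move=> semi_compact_pure_inj P P_prime; have [P_ideal [P1 _]] := P_prime.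
apply: maximal_ideal_units_mod => // s Ps; apply: contrapT => /forallNP s_nonunit.
apply: (Mpoly_not_pure_injective (P_prime := P_prime) Ps s_nonunit).
exact/semi_compact_pure_inj/semi_compact_Mpoly.
Qed.
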